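(* Let $S$ and $T$ be linear relations between two vector spaces $\mathcal{H}$ and $\mathcal{K}$. The following three statements are equivalent: (i) $S=T$; (ii) $\ker S=\ker T$ and $\operatorname{ran} S+\operatorname{ran} T\subseteq \operatorname{ran}(S\cap T)$; (iii) $\operatorname{ran} S=\operatorname{ran} T$ and $\ker(S\vee T)\subseteq \ker(S\cap T)$.
   Context: A linear relation between $\mathcal{H}$ and $\mathcal{K}$ is a linear subspace of $\mathcal{H}\times\mathcal{K}$. For such $R$: $\operatorname{ran} R=\{k:(h,k)\in R \text{ for some } h\}$, $\ker R=\{h:(h,0)\in R\}$. $S\cap T$ is the intersection of the subspaces $S,T$, and $S\vee T$ is the linear span of $S\cup T$. *)

(* vector spaces = lmodType over a fieldType F (arbitrary
   dimension).  A linear relation between H and K is a linear subspace of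
   H x K, represented as a Prop-valued relation R : H -> K -> Prop. *)
From mathcomp Require Import all_boot all_algebra.
Set Implicit Arguments. Unset Strict Implicit. Unset Printing Implicit Defensive.
Import GRing.Theory.
Local Open Scope ring_scope.

Definition linrel {F : fieldType} {H K : lmodType F} (R : H -> K -> Prop) : Prop :=
  [/\ R 0 0,
      (forall h1 k1 h2 k2, R h1 k1 -> R h2 k2 -> R (h1 + h2) (k1 + k2)) &
      (forall (a : F) h k, R h k -> R (a *: h) (a *: k))].

Definition ran {F : fieldType} {H K : lmodType F} (R : H -> K -> Prop) : K -> Prop :=
  fun k => exists h, R h k.

Definition ker {F : fieldType} {H K : lmodType F} (R : H -> K -> Prop) : H -> Prop :=
  fun h => R h 0.

Definition rel_cap {F : fieldType} {H K : lmodType F} (S T : H -> K -> Prop)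
  : H -> K -> Prop := fun h k => S h k /\ T h k.

Definition rel_join {F : fieldType} {H K : lmodType F} (S T : H -> K -> Prop)
  : H -> K -> Prop :=
  fun h k => forall U : H -> K -> Prop, linrel U ->
    (forall h' k', S h' k' -> U h' k') ->
    (forall h' k', T h' k' -> U h' k') -> U h k.

Definition subsp_sum {F : fieldType} {V : lmodType F} (A B : V -> Prop) : V -> Prop :=
  fun v => exists a b, A a /\ B b /\ v = a + b.

Definition subset_of {T : Type} (A B : T -> Prop) : Prop := forall x, A x -> B x.
Definition same_set {T : Type} (A B : T -> Prop) : Prop := forall x, A x <-> B x.

(** Both nontrivial implications follow from one observation: if [(h, k)] lies
    in [S] and [(h', k)] in [T], then [(h - h', 0)] lies in every linear
    relation containing [S] and [T].  Under (ii) one picks [(h', k)] in [S ∩ T],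
    so [h - h'] is in [ker S = ker T]; under (iii) [h - h'] is in
    [ker (S ∨ T) ⊆ ker T].  Either way [(h, k) = (h - h', 0) + (h', k)] lies in
    [T], and the reverse inclusion follows by symmetry of the hypotheses. *)

From mathcomp Require Import all_boot all_algebra.
From Stdlib Require Import FunctionalExtensionality PropExtensionality.
Set Implicit Arguments.
Unset Strict Implicit.
Unset Printing Implicit Defensive.
Import GRing.Theory.
Local Open Scope ring_scope.

Section LinearRelations.

Variables (F : fieldType) (H K : lmodType F).
Implicit Types (R S T : H -> K -> Prop) (h : H) (k : K).

Lemma linrelD R h1 k1 h2 k2 :
  linrel R -> R h1 k1 -> R h2 k2 -> R (h1 + h2) (k1 + k2).
Proof. by case=> _ addR _; apply: addR. Qed.

Lemma linrelB R h1 k1 h2 k2 :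
  linrel R -> R h1 k1 -> R h2 k2 -> R (h1 - h2) (k1 - k2).
Proof.
move=> linR R1 R2; apply: linrelD => //.
by rewrite -!scaleN1r; case: linR => _ _ scaleR; apply: scaleR.
Qed.

Lemma rel_ext S T :
  (forall h k, S h k -> T h k) -> (forall h k, T h k -> S h k) -> S = T.
Proof.
move=> ST TS; do 2![apply: functional_extensionality => ?].
by apply: propositional_extensionality; split; [apply: ST | apply: TS].
Qed.

Lemma rel_capC S T : rel_cap S T = rel_cap T S.
Proof. by apply: rel_ext => h k []. Qed.

Lemma rel_capxx S : rel_cap S S = S.
Proof. by apply: rel_ext => h k => [[]|]. Qed.

Lemma rel_joinC S T : rel_join S T = rel_join T S.
Proof. by apply: rel_ext => h k joinhk U linU SU TU; apply: joinhk. Qed.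

Lemma rel_joinxx S : linrel S -> rel_join S S = S.
Proof.
move=> linS; apply: rel_ext => h k; first by move=> joinhk; apply: joinhk.
by move=> Shk U _ SU _; apply: SU.
Qed.

Lemma ker_rel_join S T h h' k :
  S h k -> T h' k -> ker (rel_join S T) (h - h').
Proof.
move=> Shk Th'k U linU SU TU.
by rewrite -(subrr k); apply: linrelB; [| apply: SU | apply: TU].
Qed.

Lemma subsp_sum_ran S : linrel S -> subset_of (subsp_sum (ran S) (ran S)) (ran S).
Proof.
by move=> linS v [k1 [k2 [[h1 S1] [[h2 S2] ->]]]]; exists (h1 + h2); apply: linrelD.
Qed.

Lemma ran_subsp_suml S T : linrel T -> subset_of (ran S) (subsp_sum (ran S) (ran T)).
Proof.
case=> T00 _ _ k ranSk; exists k, 0; split=> //; split; last by rewrite addr0.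
by exists 0.
Qed.

Lemma subsp_sumC (V : lmodType F) (A B : V -> Prop) :
  subsp_sum A B = subsp_sum B A.
Proof.
by apply: functional_extensionality => v; apply: propositional_extensionality;
  split=> -[a [b [Aa [Bb ->]]]]; exists b, a; rewrite addrC.
Qed.

Lemma linrelDker R x h k : linrel R -> ker R x -> R h k -> R (x + h) k.
Proof. by move=> linR Rx Rhk; rewrite -[k]add0r; apply: linrelD. Qed.

Lemma subrel_of_ker_ran_cap S T :
  linrel S -> linrel T -> subset_of (ker S) (ker T) ->
  subset_of (ran S) (ran (rel_cap S T)) -> forall h k, S h k -> T h k.
Proof.
move=> linS linT kerST ranS h k Shk.
have [h' [Sh'k Th'k]] := ranS k (ex_intro _ h Shk).
have kerTd : T (h - h') 0 by apply: kerST; rewrite /ker -(subrr k); apply: linrelB.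
by rewrite -(subrK h' h); apply: linrelDker.
Qed.

Lemma subrel_of_ran_ker_join S T :
  linrel T -> subset_of (ran S) (ran T) ->
  subset_of (ker (rel_join S T)) (ker T) -> forall h k, S h k -> T h k.
Proof.
move=> linT ranST kerJ h k Shk.
have [h' Th'k] := ranST k (ex_intro _ h Shk).
have kerTd : T (h - h') 0 by apply: kerJ; apply: ker_rel_join Shk Th'k.
by rewrite -(subrK h' h); apply: linrelDker.
Qed.

Lemma rel_eq_ker_ran_cap S T : linrel S -> linrel T ->
  S = T <-> same_set (ker S) (ker T) /\
            subset_of (subsp_sum (ran S) (ran T)) (ran (rel_cap S T)).
Proof.
move=> linS linT; split=> [<- | [kerST sumST]].
  by rewrite rel_capxx; split=> //; apply: subsp_sum_ran.
apply: rel_ext; apply: subrel_of_ker_ran_cap => //.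
- by move=> x /kerST.
- by move=> k ranSk; apply: sumST; apply: ran_subsp_suml.
- by move=> x /kerST.
- by move=> k ranTk; rewrite rel_capC; apply: sumST; rewrite subsp_sumC;
    apply: ran_subsp_suml.
Qed.

Lemma rel_eq_ran_ker_join S T : linrel S -> linrel T ->
  S = T <-> same_set (ran S) (ran T) /\
            subset_of (ker (rel_join S T)) (ker (rel_cap S T)).
Proof.
move=> linS linT; split=> [<- | [ranST kerJ]].
  by rewrite rel_joinxx // rel_capxx.
apply: rel_ext; apply: subrel_of_ran_ker_join => //.
- by move=> k /ranST.
- by move=> x /kerJ [].
- by move=> k /ranST.
- by rewrite rel_joinC => x /kerJ [].
Qed.

End LinearRelations.

Theorem corollary3p2 (F : fieldType) (H K : lmodType F)
  (S T : H -> K -> Prop) (hS : linrel S) (hT : linrel T) :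
  [/\ (S = T <-> (same_set (ker S) (ker T) /\
                  subset_of (subsp_sum (ran S) (ran T)) (ran (rel_cap S T)))),
      ((same_set (ker S) (ker T) /\
        subset_of (subsp_sum (ran S) (ran T)) (ran (rel_cap S T))) <->
       (same_set (ran S) (ran T) /\
        subset_of (ker (rel_join S T)) (ker (rel_cap S T)))) &
      (S = T <-> (same_set (ran S) (ran T) /\
                  subset_of (ker (rel_join S T)) (ker (rel_cap S T))))].
Proof.
have eq_ii := rel_eq_ker_ran_cap hS hT.
have eq_iii := rel_eq_ran_ker_join hS hT.
by split=> //; apply: iff_trans (iff_sym eq_ii) eq_iii.
Qed.
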